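(* Let $\Bbbk$ be an algebraically closed field of characteristic $2$ and let $\mathfrak{u}(\mathfrak{m})$ be the algebra generated by $a,b,c$ with relations $ab+ba=c$, $ac+ca=a$, $bc+cb=b$, $a^4=b^4=0$, $c^2+c=0$. For every finite-dimensional left $\mathfrak{u}(\mathfrak{m})$-module $V$, the Jordan normal form of the operator by which $a$ acts on $V$ has no Jordan block of size $2$. *)

From mathcomp Require Import all_boot all_order all_algebra.
Set Implicit Arguments. Unset Strict Implicit. Unset Printing Implicit Defensive.
Import GRing.Theory.
Local Open Scope ring_scope.

Definition jdef (K : fieldType) : K * nat := (0, 0%N).

Definition jordan_block (K : fieldType) (lam : K) (m : nat) : 'M[K]_m :=
  \matrix_(i < m, j < m) (if j == i then lam else if (nat_of_ord j == i.+1)%N then 1 else 0).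

Definition jordan_mx (K : fieldType) (s : seq (K * nat)) :
  'M[K]_(\sum_(i < size s) (nth (jdef K) s i).2) :=
  mxdiag (fun i : 'I_(size s) =>
            jordan_block (nth (jdef K) s i).1 (nth (jdef K) s i).2).

Definition is_jordan_form (K : fieldType) (n : nat) (A : 'M[K]_n)
    (s : seq (K * nat)) : Prop :=
  all (fun x => (0 < x.2)%N) s /\
  exists (e : (\sum_(i < size s) (nth (jdef K) s i).2)%N = n),
  exists2 P : 'M[K]_n, P \in unitmx &
    A = invmx P *m castmx (e, e) (jordan_mx s) *m P.

Definition um_module (K : fieldType) (n : nat) (A B C : 'M[K]_n) : Prop :=
  [/\ A *m B + B *m A = C,
      A *m C + C *m A = A,
      B *m C + C *m B = B &
      [/\ A *m A *m A *m A = 0,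
      B *m B *m B *m B = 0 &
      C *m C + C = 0]].

(* In characteristic 2 the relations give a = ac + ca = a(ab + ba) + (ab + ba)a
   = a^2 b + b a^2, so whenever a^2 v = 0 we get a v = a^2 (b v): the operator
   a maps ker a^2 into im a^2.  This property is invariant under conjugation and
   is inherited by every diagonal block of a Jordan form of a.  Since a is
   nilpotent, a block of size 2 would be the block J with eigenvalue 0, for
   which J^2 = 0 while J e_2 = e_1 <> 0, a contradiction. *)
From mathcomp Require Import all_boot all_order all_algebra.
Set Implicit Arguments. Unset Strict Implicit. Unset Printing Implicit Defensive.
Import GRing.Theory.
Local Open Scope ring_scope.

Lemma mul_mxdiag (R : pzSemiRingType) p (p_ : 'I_p -> nat)
    (D_ E_ : forall i, 'M[R]_(p_ i)) :
  \mxdiag_i D_ i *m \mxdiag_i E_ i = \mxdiag_i (D_ i *m E_ i).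
Proof.
rewrite [X in _ *m X]/mxdiag mul_mxdiag_mxblock /mxdiag.
apply/eq_mxblock => i j.
by case: eqVneq => [->|_]; rewrite ?conform_mx_id ?mulmx0.
Qed.

Lemma mxdiagX (R : pzSemiRingType) p (p_ : 'I_p -> nat)
    (D_ : forall i, 'M[R]_(p_ i)) k :
  (\mxdiag_i D_ i) ^+ k = \mxdiag_i (D_ i ^+ k).
Proof.
elim: k => [|k IHk]; first exact: (esym (mxdiagZ 1)).
by rewrite exprS IHk -mulmxE mul_mxdiag; apply: eq_mxdiag => i; rewrite exprS.
Qed.

Lemma expr_invmx_conj (R : comUnitRingType) n (P M : 'M[R]_n) k :
  P \in unitmx -> (P *m M *m invmx P) ^+ k = P *m M ^+ k *m invmx P.
Proof.
move=> Pu; elim: k => [|k IHk]; first by rewrite !expr0 mulmx1 mulmxV.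
rewrite !exprS -!mulmxE IHk !mulmxA -(mulmxA _ (invmx P)) mulVmx //.
by rewrite mulmx1.
Qed.

Section SquareKernelInSquareImage.
Variable K : fieldType.

Definition maps_sqker_into_sqimg m (M : 'M[K]_m) : Prop :=
  forall v : 'cV_m, M *m M *m v = 0 -> exists w, M *m v = M *m M *m w.

Lemma maps_sqker_into_sqimg_conj n (P M : 'M[K]_n) : P \in unitmx ->
  maps_sqker_into_sqimg M -> maps_sqker_into_sqimg (P *m M *m invmx P).
Proof.
move=> Pu hM v.
have cancelP m (X : 'M[K]_(m, n)) : X *m invmx P *m P = X.
  by rewrite -mulmxA mulVmx // mulmx1.
rewrite !mulmxA cancelP -!mulmxA => /(congr1 (mulmx (invmx P))).
rewrite mulmx0 !mulmxA mulVmx // mul1mx -mulmxA => /hM[w hw].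
by exists (P *m w); rewrite !mulmxA cancelP -!mulmxA hw !mulmxA.
Qed.

Lemma maps_sqker_into_sqimg_mxdiag p (p_ : 'I_p -> nat)
    (D_ : forall i, 'M[K]_(p_ i)) i :
  maps_sqker_into_sqimg (\mxdiag_i D_ i) -> maps_sqker_into_sqimg (D_ i).
Proof.
move=> hD v hv.
pose u := \mxcol_j (if j == i then conform_mx 0 v else 0 : 'M[K]_(p_ j, 1)).
have [|w] := hD u.
  rewrite -mulmxA !mul_mxdiag_mxcol -(@mxcol0 _ _ p_); apply/eq_mxcol => j.
  by case: eqP => [->|_]; rewrite ?conform_mx_id ?mulmxA ?mulmx0.
rewrite -(submxcolK w) -!mulmxA !mul_mxdiag_mxcol.
move=> /(congr1 (fun X => submxcol X i)).
rewrite !mxcolK eqxx conform_mx_id !mulmxA.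
by exists (submxcol w i).
Qed.

Lemma jordan_block_mul_delta0 (lam : K) m :
  jordan_block lam m.+1 *m delta_mx 0 0 = lam *: (delta_mx 0 0 : 'cV_m.+1).
Proof.
rewrite -colE; apply/matrixP => i j; rewrite !mxE ord1 /= eq_sym.
by case: eqP; rewrite ?mulr1 ?mulr0.
Qed.

Lemma jordan_block_nilpotent_eig0 (lam : K) m k :
  jordan_block lam m.+1 ^+ k = 0 -> lam = 0.
Proof.
move=> Jk0; set e0 : 'cV[K]_m.+1 := delta_mx 0 0.
have Jke0 : jordan_block lam m.+1 ^+ k *m e0 = lam ^+ k *: e0.
  elim: k {Jk0} => [|k IHk]; first by rewrite !expr0 mul1mx scale1r.
  rewrite exprSr -mulmxE -mulmxA jordan_block_mul_delta0 -scalemxAr IHk.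
  by rewrite scalerA -exprS.
move: Jke0; rewrite Jk0 mul0mx => /matrixP/(_ 0 0); rewrite !mxE /= mulr1.
by move/esym/eqP; rewrite expf_eq0 => /andP[_ /eqP].
Qed.

Lemma jordan_block0_2_not_maps_sqker :
  ~ maps_sqker_into_sqimg (jordan_block (0 : K) 2).
Proof.
set J := jordan_block 0 2.
have J2 : J *m J = 0.
  apply/matrixP => i j; rewrite !mxE !big_ord_recl big_ord0 !mxE.
  by case: i => [[|[|i]] ?] //=; case: j => [[|[|j]] ?];
    rewrite //= ?mulr0 ?mul0r ?addr0.
move=> /(_ (delta_mx 1 0)); rewrite J2 mul0mx => /(_ erefl)[w].
rewrite mul0mx -colE => /matrixP/(_ 0 0); rewrite !mxE /=.
by move/eqP; rewrite oner_eq0.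
Qed.

Lemma jordan_block_size_neq2 (lam : K) m k :
  jordan_block lam m ^+ k = 0 -> maps_sqker_into_sqimg (jordan_block lam m) ->
  m <> 2%N.
Proof.
move=> Jk0 hJ m2; subst m.
rewrite (jordan_block_nilpotent_eig0 Jk0) in hJ.
exact: jordan_block0_2_not_maps_sqker.
Qed.

End SquareKernelInSquareImage.

Lemma um_module_sandwich (K : fieldType) n (A B C : 'M[K]_n) :
  (2 \in [pchar K])%N -> um_module A B C -> A = A *m A *m B + B *m A *m A.
Proof.
move=> hchar [hAB hAC _ _].
have addxx (X : 'M[K]_n) : X + X = 0.
  by rewrite -mulr2n -scaler_nat (pcharf0 hchar) scale0r.
rewrite -{1}hAC -hAB mulmxDr mulmxDl !mulmxA addrA.
by rewrite -(addrA _ (A *m B *m A) (A *m B *m A)) addxx addr0.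
Qed.

Lemma um_module_maps_sqker (K : fieldType) n (A B C : 'M[K]_n) :
  (2 \in [pchar K])%N -> um_module A B C -> maps_sqker_into_sqimg A.
Proof.
move=> hchar hum v; rewrite -mulmxA => hv; exists (B *m v).
by rewrite {1}(um_module_sandwich hchar hum) mulmxDl -!mulmxA hv !mulmx0 addr0.
Qed.

Theorem lemma3p5 (K : closedFieldType) (hchar : (2 \in [pchar K])%N)
  (n : nat) (A B C : 'M[K]_n) :
  um_module A B C ->
  forall s : seq (K * nat), is_jordan_form A s ->
  forall x, x \in s -> x.2 <> 2%N.
Proof.
move=> hum s [_ [e [P Pu defA]]] x xs; subst n; rewrite castmx_id in defA.
have defJ : jordan_mx s = P *m A *m invmx P.
  by rewrite defA !mulmxA mulmxV // mul1mx -mulmxA mulmxV // mulmx1.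
have A4 : A ^+ 4 = 0.
  by case: hum => _ _ _ [hA4 _ _]; rewrite !exprS expr0 mulr1 -!mulmxE !mulmxA.
have [i <-] : exists i : 'I_(size s), nth (jdef K) s i = x.
  by exists (Ordinal (etrans (index_mem x s) xs)); rewrite /= nth_index.
have J4 : jordan_mx s ^+ 4 = 0.
  by rewrite defJ expr_invmx_conj // A4 mulmx0 mul0mx.
have hJ : maps_sqker_into_sqimg (jordan_mx s).
  rewrite defJ; apply: maps_sqker_into_sqimg_conj => //.
  exact: um_module_maps_sqker hchar hum.
move: J4 hJ; rewrite /jordan_mx mxdiagX -mxdiag0 => /eq_mxdiagP J4 hJ.
exact: jordan_block_size_neq2 (J4 i) (maps_sqker_into_sqimg_mxdiag (i := i) hJ).
Qed.
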